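(* Let $(X,\Psi)$ be a $\sigma$-compact uniform space and $Y\subseteq X$. The following are equivalent: (1) $X$ satisfies $\textsf{S}_1(\Omega,\Omega_Y)$; (2) ONE has no winning strategy in the game ${\sf G}_1(\Omega,\Omega_Y)$ on $X$.
   Context: A uniformity on $X$ is a filter $\Psi$ on $X\times X$ whose members contain the diagonal, closed under $U\mapsto U^{-1}$, such that for each $U\in\Psi$ there is $V\in\Psi$ with $V\circ V\subseteq U$, and with intersection equal to the diagonal; $X$ has the topology with neighbourhood bases $\{U(x):U\in\Psi\}$, $U(x)=\{y:(x,y)\in U\}$. $\sigma$-compact: countable union of compact sets. $\Omega$: $\omega$-covers of $X$ (open covers $\mathcal{U}$ with $X\notin\mathcal{U}$ such that each finite subset of $X$ lies in some member). $\Omega_Y$: families of open subsets of $X$, none containing $Y$, such that each finite subset of $Y$ lies in some member. $\textsf{S}_1(\mathcal{A},\mathcal{B})$: for every sequence $(O_n)$ of elements of $\mathcal{A}$ there are $T_n\in O_n$ with $\{T_n\}\in\mathcal{B}$. Game ${\sf G}_1(\mathcal{A},\mathcal{B})$: in inning $n$ ONE chooses $O_n\in\mathcal{A}$, TWO responds with $T_n\in O_n$; TWO wins if $\{T_n:n\in\mathbb{N}\}\in\mathcal{B}$, else ONE wins. *)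

From mathcomp Require Import all_boot all_algebra.
From mathcomp Require Import all_classical all_reals all_analysis.
Set Implicit Arguments. Unset Strict Implicit. Unset Printing Implicit Defensive.
Local Open Scope classical_set_scope.

Section Selection.
Variable X : uniformType.

Definition separated_uniformity : Prop :=
  \bigcap_(U in [set U : set (X * X) | entourage U]) U = diagonal.

Definition sigma_compact : Prop :=
  exists K : nat -> set X, (forall n, compact (K n)) /\ \bigcup_n K n = setT.

Definition Omega : set (set (set X)) :=
  [set U | (forall V, U V -> open V) /\ \bigcup_(V in U) V = setT /\ ~ U setT /\
           (forall F : set X, finite_set F -> exists2 V, U V & F `<=` V)].

Definition OmegaY (Y : set X) : set (set (set X)) :=
  [set U | (forall V, U V -> open V) /\ (forall V, U V -> ~ (Y `<=` V)) /\
           (forall F : set X, finite_set F -> F `<=` Y -> exists2 V, U V & F `<=` V)].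

Definition S1 (A B : set (set (set X))) : Prop :=
  forall O : nat -> set (set X), (forall n, A (O n)) ->
    exists T : nat -> set X, (forall n, O n (T n)) /\ B (range T).

(* Game G_1(A,B): a strategy for ONE maps the finite sequence of TWO's
   previous moves to ONE's next move, a member of A. *)
Definition play_follows (sigma : seq (set X) -> set (set X)) (T : nat -> set X) :=
  forall n, sigma (mkseq T n) (T n).

Definition ONE_has_winning_strategy (A B : set (set (set X))) : Prop :=
  exists sigma : seq (set X) -> set (set X),
    (forall s, A (sigma s)) /\
    (forall T : nat -> set X, play_follows sigma T -> ~ B (range T)).
End Selection.

From mathcomp Require Import all_boot all_algebra.
From mathcomp Require Import all_classical all_reals all_analysis.

Local Open Scope classical_set_scope.

(* If S1(Omega, Omega_Y) holds, X \ Y is finite: otherwise the omega-cover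
   {X \ {p} : p \notin Y} has no selection in Omega_Y.  Against a strategy
   sigma of ONE, TWO only answers with members of ONE's move that contain
   X \ Y, hence never contain Y.  By compactness, at a node of depth k finitely
   many of them already contain every set of at most j points of K_j, where
   (n, j) is the pair coded by k; so the tree of such plays is finitely
   branching.  Open sets lying inside a chosen member at every node of a level
   coded by (n, _) form an omega-cover Q_n, and an S1-selection W_n in Q_n
   steers a branch: at that level TWO picks a member containing W_n.  This play
   follows sigma, and every finite subset of Y lies in some W_n, hence in one
   of TWO's moves.  Conversely, a sequence of omega-covers witnessing the
   failure of S1 is, played blindly, a winning strategy for ONE. *)

Lemma set_seq_cons {I : eqType} (x : I) (s : seq I) :
  [set` x :: s] = x |` [set` s].
Proof.
apply/seteqP; split=> y /=; rewrite in_cons; first by case/orP=> [/eqP|]; auto.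
by case=> [->|->]; rewrite ?eqxx ?orbT.
Qed.

Section finite_subfamilies.
Context {T : topologicalType}.

Lemma filter_bigcap_seq {I : eqType} (F : set_system T) (s : seq I)
    (f : I -> set T) :
  Filter F -> (forall i, i \in s -> F (f i)) -> F (\bigcap_(i in [set` s]) f i).
Proof.
move=> FF; elim: s => [|i s IH] Ff.
  by apply: filterS filterT => x _ i /=; rewrite in_nil.
apply: filterS (filterI (Ff i (mem_head i s)) (IH _)) => [x [fi fsi] j|j js].
  by rewrite /= in_cons => /orP[/eqP->//|]; exact: fsi.
by apply: Ff; rewrite in_cons js orbT.
Qed.

Lemma compact_nbhs_subcover {K : set T} {N : T -> set T} :
  compact K -> (forall x, K x -> nbhs x (N x)) ->
  exists2 D : seq T, [set` D] `<=` K & K `<=` \bigcup_(x in [set` D]) N x.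
Proof.
move=> cptK nbhsN; apply: contrapT => noD.
pose uncovered (D : seq T) := K `\` \bigcup_(x in [set` D]) N x.
pose G := filter_from [set D : seq T | [set` D] `<=` K] uncovered.
have GF : Filter G.
  apply: filter_from_filter; first by exists [::] => x.
  move=> D1 D2 D1K D2K; exists (D1 ++ D2).
    by move=> x /=; rewrite mem_cat => /orP[/D1K|/D2K].
  move=> x [Kx nD12x]; split; split=> // -[y yD Nyx]; apply: nD12x.
    by exists y => //=; rewrite mem_cat yD.
  by exists y => //=; rewrite mem_cat yD orbT.
have GP : ProperFilter G.
  apply: filter_from_proper => D DK; apply/set0P/eqP => D0; apply: noD.
  exists D => // x Kx; apply: contrapT => nDx.
  by have : uncovered D x by []; rewrite D0.
have [y [Ky clGy]] : K `&` cluster G !=set0.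
  by apply: cptK; exists [::] => [x|x []].
have Gy : G (uncovered [:: y]).
  by exists [:: y] => // x /=; rewrite inE => /eqP->.
have [z [[_ nNz] Nyz]] := clGy _ _ Gy (nbhsN y Ky).
by apply: nNz; exists y; rewrite //= mem_head.
Qed.

Definition k_cover (k : nat) (K : set T) (U : set (set T)) :=
  forall s : seq T, (size s <= k)%N -> [set` s] `<=` K ->
    exists2 V, U V & [set` s] `<=` V.

(* Induction on k: the members of a finite k-subcover for the family of
   members containing x intersect to a neighbourhood of x. *)
Lemma compact_finite_k_subcover {k} {K : set T} {U : set (set T)} :
  compact K -> (forall V, U V -> open V) -> k_cover k K U ->
  exists2 A : seq (set T), [set` A] `<=` U & k_cover k K [set` A].
Proof.
move=> cptK; elim: k U => [|k IH] U oU Ucov;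
  have [V0 UV0 _] := Ucov [::] isT (ltac:(by rewrite set_nil)).
  exists [:: V0]; first by rewrite set_cons1 => V ->.
  by case=> // _ _; exists V0; [exact: mem_head | rewrite set_nil].
have Ax x : exists A : seq (set T), K x ->
    [set` A] `<=` [set V | U V /\ V x] /\ k_cover k K [set` A].
  have [Kx|nKx] := pselect (K x); last by exists [::] => /nKx.
  have [|A AU Acov] :=
    IH [set V | U V /\ V x] (fun V '(conj UV _) => oU V UV).
    move=> s ss sK.
    have xsK : [set` x :: s] `<=` K by rewrite set_seq_cons => y [->|/sK].
    have [V UV] := Ucov (x :: s) ss xsK.
    by rewrite set_seq_cons subUset => -[/(_ x erefl) Vx sV]; exists V.
  by exists A.
have [A Aspec] := choice Ax.
pose N x := \bigcap_(V in [set` A x]) V.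
have nbhsN x : K x -> nbhs x (N x).
  move=> Kx; apply: filter_bigcap_seq => V VAx.
  have [/(_ V VAx) [UV Vx] _] := Aspec x Kx.
  by apply: open_nbhs_nbhs; split; [exact: oU|].
have [D DK KD] := compact_nbhs_subcover cptK nbhsN.
exists (V0 :: flatten [seq A x | x <- D]).
  rewrite set_seq_cons => V [->//|/flatten_mapP[x xD VAx]].
  by have [/(_ V VAx) []] := Aspec x (DK x xD).
case=> [|y s] ss; first by exists V0; [exact: mem_head | rewrite set_nil].
rewrite set_seq_cons subUset => -[/(_ y erefl) Ky sK].
have [x xD Nxy] := KD y Ky.
have [_ Axcov] := Aspec x (DK x xD).
have [V VAx sV] := Axcov s ss sK.
exists V; first by rewrite set_seq_cons; right; apply/flatten_mapP; exists x.
by move=> z [->|/sV//]; exact: Nxy.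
Qed.
End finite_subfamilies.

Section strategy_tree.
Context {X : uniformType} {Y : set X} {K : nat -> set X}
  {sigma : seq (set X) -> set (set X)}.
Hypotheses (cptK : forall n, compact (K n))
  (K_nondecreasing : forall i j, (i <= j)%N -> K i `<=` K j)
  (K_cover : \bigcup_n K n = setT)
  (sigma_Omega : forall s, Omega (sigma s))
  (finite_notY : finite_set (~` Y)).

(* Restricting ONE's moves to those containing the finite set X \ Y keeps
   them an omega-cover while forbidding TWO to answer with a superset of Y. *)
Definition moves (s : seq (set X)) := [set V | sigma s V /\ ~` Y `<=` V].

Lemma moves_open {s V} : moves s V -> open V.
Proof. by case=> sV _; have [oV _] := sigma_Omega s; exact: oV. Qed.

Lemma moves_k_cover s k (L : set X) : k_cover k L (moves s).
Proof.
move=> f _ _; have [_ [_ [_ sigma_fin]]] := sigma_Omega s.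
have [|V sV fYV] := sigma_fin ([set` f] `|` ~` Y).
  by rewrite finite_setU; split=> //; apply/finite_seqP; exists f.
by exists V; [split=> // x Yx|move=> x fx]; apply: fYV; [right|left].
Qed.

(* Depth [depth n j] of the tree is reserved for the n-th selection; its
   nodes branch enough to contain any j points of K j. *)
Definition depth (n j : nat) : nat := choice.pickle (n, j).

Definition depth_bound (k : nat) : nat :=
  if @choice.unpickle (nat * nat)%type k is Some (_, j) then j else 0.

Lemma depth_boundK (n : nat) : cancel (depth n) depth_bound.
Proof. by move=> j; rewrite /depth_bound /depth choice.pickleK. Qed.

Lemma depth_inj (n n' j j' : nat) : depth n j = depth n' j' -> n = n'.
Proof. by move/(pcan_inj choice.pickleK) => [->]. Qed.

Definition branching (s : seq (set X)) : seq (set X) :=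
  let j := depth_bound (size s) in
  s2val (cid2 (compact_finite_k_subcover (cptK j) (@moves_open s)
                 (moves_k_cover s j (K j)))).

Lemma branching_moves {s V} : V \in branching s -> moves s V.
Proof. by move: V; rewrite /branching; case: cid2. Qed.

Lemma branching_k_cover s :
  let j := depth_bound (size s) in k_cover j (K j) [set` branching s].
Proof. by rewrite /branching; case: cid2. Qed.

Lemma branching_nonempty s : exists V, V \in branching s.
Proof.
have [V Vs _] := branching_k_cover s [::] isT (ltac:(by rewrite set_nil)).
by exists V.
Qed.

Fixpoint level (k : nat) : seq (seq (set X)) :=
  if k is k'.+1 then [seq rcons t V | t <- level k', V <- branching t]
  else [:: [::]].

Lemma size_level {k t} : t \in level k -> size t = k.
Proof.
elim: k t => [|k IH] t /=; first by rewrite inE => /eqP->.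
by case/allpairsPdep=> t' [V [/IH <- _ ->]]; rewrite size_rcons.
Qed.

Lemma rcons_level k t V : t \in level k -> V \in branching t ->
  rcons t V \in level k.+1.
Proof. exact: (allpairs_f_dep rcons). Qed.

Lemma level_nonempty k : exists t, t \in level k.
Proof.
elim: k => [|k [t tk]]; first by exists [::]; rewrite inE.
by have [V Vt] := branching_nonempty t; exists (rcons t V); exact: rcons_level.
Qed.

Lemma finite_seq_in_K (f : seq X) :
  exists j, (size f <= j)%N /\ [set` f] `<=` K j.
Proof.
elim: f => [|x f [j [fj fK]]]; first by exists 0%N; split; rewrite ?set_nil.
have [i _ Kix] : (\bigcup_n K n) x by rewrite K_cover.
exists (maxn i j).+1; split; first by rewrite /= ltnS leq_max fj orbT.
rewrite set_seq_cons => y [->|/fK].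
  exact: K_nondecreasing _ _ (leqW (leq_maxl i j)) _ Kix.
exact: K_nondecreasing _ _ (leqW (leq_maxr i j)) y.
Qed.

Definition refining (n : nat) : set (set X) :=
  [set W | open W /\ exists j, forall t, t \in level (depth n j) ->
                                 exists2 V, V \in branching t & W `<=` V].

Lemma refining_finite_cover n {F : set X} :
  finite_set F -> exists2 W, refining n W & F `<=` W.
Proof.
move=> /finite_seqP[f ->]; have [j [fj fK]] := finite_seq_in_K f.
set k := depth n j.
have Vex t : exists V, t \in level k -> V \in branching t /\ [set` f] `<=` V.
  have [tk|ntk] := pselect (t \in level k); last by exists setT.
  have := branching_k_cover t; rewrite /= (size_level tk) depth_boundK.
  by move=> /(_ f fj fK)[V Vt fV]; exists V.
have [V Vspec] := choice Vex.
exists (\bigcap_(t in [set` level k]) V t)°.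
  split; first exact: open_interior.
  exists j => t tk; exists (V t); first by have [] := Vspec t tk.
  by move=> x /interior_subset; apply.
move=> x fx; apply: filter_bigcap_seq => t tk; have [Vt fV] := Vspec t tk.
apply: open_nbhs_nbhs; split; last exact: fV.
exact: moves_open (branching_moves Vt).
Qed.

Lemma refining_Omega n : Omega (refining n).
Proof.
split; first by move=> W [].
split.
  apply/seteqP; split=> // x _.
  have [W nW xW] := refining_finite_cover n (finite_set1 x).
  by exists W; last exact: xW.
split; last exact: refining_finite_cover.
case=> _ [j Wj]; have [t tk] := level_nonempty (depth n j).
have [V /branching_moves[sV _] TV] := Wj t tk.
have [_ [_ [nT _]]] := sigma_Omega t; apply: nT.
by have -> : setT = V by apply/seteqP; split.
Qed.

Section steered_play.
Context {W : nat -> set X} {j : nat -> nat}.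
Hypothesis W_refining : forall n t, t \in level (depth n (j n)) ->
  exists2 V, V \in branching t & W n `<=` V.

Lemma steer_exists t : exists V, V \in branching t /\
  (t \in level (size t) -> forall n, depth n (j n) = size t -> W n `<=` V).
Proof.
have [V0 V0t] := branching_nonempty t.
have [[tk [n kn]]|none] := pselect
  (t \in level (size t) /\ exists n, depth n (j n) = size t); last first.
  by exists V0; split=> // tk n kn; exfalso; apply: none; split=> //; exists n.
have [V Vt WV] : exists2 V, V \in branching t & W n `<=` V.
  by apply: W_refining; rewrite kn.
by exists V; split=> // _ n'; rewrite -kn => /depth_inj ->.
Qed.

Definition steer t : set X := projT1 (cid (steer_exists t)).

Lemma steerP t : steer t \in branching t /\
  (t \in level (size t) ->
     forall n, depth n (j n) = size t -> W n `<=` steer t).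
Proof. exact: projT2 (cid (steer_exists t)). Qed.

Fixpoint steered_prefix (k : nat) : seq (set X) :=
  if k is k'.+1 then rcons (steered_prefix k') (steer (steered_prefix k'))
  else [::].

Definition steered_play (k : nat) : set X := steer (steered_prefix k).

Lemma steered_prefixE k : steered_prefix k = mkseq steered_play k.
Proof. by elim: k => //= k IH; rewrite mkseqS -IH. Qed.

Lemma steered_prefix_level k : steered_prefix k \in level k.
Proof.
elim: k => [|k IH]; first by rewrite inE.
exact: rcons_level IH (steerP _).1.
Qed.

Lemma steered_play_moves k : moves (mkseq steered_play k) (steered_play k).
Proof. by rewrite -steered_prefixE; exact: branching_moves (steerP _).1. Qed.

Lemma steered_play_refines n : W n `<=` steered_play (depth n (j n)).
Proof.
set k := depth n (j n).
have sk : size (steered_prefix k) = k by rewrite steered_prefixE size_mkseq.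
by apply: (steerP _).2; rewrite sk ?steered_prefix_level.
Qed.

Lemma steered_play_OmegaY :
  OmegaY Y (range W) -> OmegaY Y (range steered_play).
Proof.
move=> [_ [_ W_fin]]; split.
  by move=> _ [k _ <-]; exact: moves_open (steered_play_moves k).
split.
  move=> _ [k _ <-] YT; have [sT notYT] := steered_play_moves k.
  have [_ [_ [nT _]]] := sigma_Omega (mkseq steered_play k); apply: nT.
  suff <- : steered_play k = setT by [].
  by apply/seteqP; split=> // x _; have [/YT|/notYT] := pselect (Y x).
move=> F finF FY; have [_ [n _ <-] FW] := W_fin F finF FY.
exists (steered_play (depth n (j n))); first by exists (depth n (j n)).
exact: subset_trans FW (steered_play_refines n).
Qed.

End steered_play.

Lemma S1_defeats_strategy : S1 (@Omega X) (OmegaY Y) ->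
  exists T, play_follows sigma T /\ OmegaY Y (range T).
Proof.
move=> S1Y; have [W [W_refining WY]] := S1Y refining refining_Omega.
have /choice[j Wj] : forall n, exists j, forall t, t \in level (depth n j) ->
    exists2 V, V \in branching t & W n `<=` V.
  by move=> n; have [_ [j Wj]] := W_refining n; exists j.
exists (steered_play Wj); split; last exact: steered_play_OmegaY.
by move=> k; have [] := steered_play_moves Wj k.
Qed.

End strategy_tree.

Lemma separated_closed_set1 {X : uniformType} :
  @separated_uniformity X -> forall x : X, closed [set x].
Proof.
move=> sep; apply/accessible_closed_set1/hausdorff_accessible => p q.
rewrite -closeEnbhs entourage_close => pq.
have : (\bigcap_(U in [set U | entourage U]) U) (p, q) by move=> U; exact: pq.
by rewrite sep.
Qed.

Lemma S1_cofinite {X : uniformType} {Y : set X} :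
  (forall x : X, closed [set x]) -> S1 (@Omega X) (OmegaY Y) ->
  finite_set (~` Y).
Proof.
move=> closed1 S1Y; apply: contrapT => infYC.
pose U := [set ~` [set p] | p in ~` Y].
have U_fin F : finite_set F -> exists2 V, U V & F `<=` V.
  move=> finF; have [p [nYp nFp]] := infinite_setN0 (infinite_setD infYC finF).
  by exists (~` [set p]); [exists p | move=> x Fx xp; apply: nFp; rewrite -xp].
have U_Omega : Omega U.
  split; first by move=> _ [p _ <-]; exact: closed_openC.
  split.
    apply/seteqP; split=> // x _.
    by have [V UV xV] := U_fin _ (finite_set1 x); exists V; last exact: xV.
  split; last exact: U_fin.
  by case=> p _ e; have /(_ erefl) : (~` [set p]) p by rewrite e.
have [T [UT [_ [nY _]]]] := S1Y (fun=> U) (fun=> U_Omega).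
have [p nYp e] := UT 0%N.
apply: (nY (T 0%N)); first by exists 0%N.
by rewrite -e => y Yy yp; apply: nYp; rewrite -yp.
Qed.

Lemma sigma_compact_nondecreasing {X : uniformType} : @sigma_compact X ->
  exists K : nat -> set X, [/\ forall n, compact (K n),
    forall i j, (i <= j)%N -> K i `<=` K j & \bigcup_n K n = setT].
Proof.
move=> [K [cptK K_cover]]; exists (fun j => \bigcup_(i < j.+1) K i); split.
- by move=> j; rewrite bigcup_mkord; exact: bigsetU_compact.
- by move=> i j ij x [k /= ki Kkx]; exists k => //=; exact: leq_trans ki _.
- apply/seteqP; split=> // x _.
  have [n _ Knx] : (\bigcup_n K n) x by rewrite K_cover.
  by exists n => //; exists n => /=.
Qed.

Lemma not_S1_ONE_wins (X : uniformType) (A B : set (set (set X))) :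
  ~ S1 A B -> ONE_has_winning_strategy A B.
Proof.
move=> /existsNP[Os /not_implyP[AOs noT]].
exists (fun s => Os (size s)); split=> // T Tplay BT; apply: noT.
by exists T; split=> // n; have := Tplay n; rewrite size_mkseq.
Qed.

Theorem theorem4p5 (X : uniformType) (Y : set X) :
  @separated_uniformity X -> @sigma_compact X ->
  (S1 (@Omega X) (OmegaY Y) <-> ~ ONE_has_winning_strategy (@Omega X) (OmegaY Y)).
Proof.
move=> sep sc; split=> [S1Y [sigma [sigma_Omega sigma_wins]]|noWin]; last first.
  by apply: contrapT => /not_S1_ONE_wins.
have [K [cptK K_nondecreasing K_cover]] := sigma_compact_nondecreasing sc.
have finYC := S1_cofinite (separated_closed_set1 sep) S1Y.
have [T [Tplay TY]] :=
  S1_defeats_strategy cptK K_nondecreasing K_cover sigma_Omega finYC S1Y.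
exact: sigma_wins T Tplay TY.
Qed.
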